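(* Let $G$ be a graph that is $(P_4\cup K_1, C_4)$-free and not perfect. Then $G$ is connected and there exists a partition $(V_1,V_2,V_3)$ of $V(G)$ (parts possibly empty) such that (i) $G[V_1]$ is $P_4$-free, and (ii) $V_2$ and $V_3$ are cliques of $G$.
   Context: All graphs are finite, simple and undirected. $P_n$, $C_n$, $K_n$ denote the path, cycle and complete graph on $n$ vertices; $G_1\cup G_2$ denotes the disjoint union of two graphs. For a family $\mathcal F$ of graphs, $G$ is $\mathcal F$-free if no induced subgraph of $G$ is isomorphic to a member of $\mathcal F$. For $S\subseteq V(G)$, $G[S]$ is the subgraph induced by $S$. A graph $G$ is perfect if $\chi(H)=\omega(H)$ for every induced subgraph $H$ of $G$, where $\chi$ is the chromatic number and $\omega$ the clique number. *)

(* A simple graph is a symmetric irreflexive relation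
   e : rel T on a finite type T (vertex set V(G) = T). *)
From mathcomp Require Import all_boot.
Set Implicit Arguments. Unset Strict Implicit. Unset Printing Implicit Defensive.

Section Graphs.
Variables (T : finType) (e : rel T).

Definition induced_in (k : nat) (h : rel 'I_k) (S : {set T}) : Prop :=
  exists f : 'I_k -> T,
    [/\ injective f, (forall i, f i \in S) & (forall i j, e (f i) (f j) = h i j)].

Definition clique (S : {set T}) : bool :=
  [forall x in S, forall y in S, (x != y) ==> e x y].

Definition omega (S : {set T}) : nat :=
  \max_(K : {set T} | (K \subset S) && clique K) #|K|.

(* G[S] admits a proper colouring with colours in {0,..,k-1}
   (colours drawn from 'I_(#|T|.+1), which suffices for any k <= #|T|) *)
Definition colorable (S : {set T}) (k : nat) : bool :=
  [exists c : {ffun T -> 'I_#|T|.+1},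
     [forall x in S, c x < k] &&
     [forall x in S, forall y in S, e x y ==> (c x != c y)]].

Definition chi (S : {set T}) : nat :=
  \big[minn/#|T|]_(k < #|T|.+1 | colorable S k) k.

Definition perfect : Prop := forall S : {set T}, chi S = omega S.

Definition connected : Prop := forall x y : T, connect e x y.

End Graphs.

Definition P4 : rel 'I_4 := fun i j => (i.+1 == j :> nat) || (j.+1 == i :> nat).
Definition P4K1 : rel 'I_5 :=
  fun i j => [&& (i < 4), (j < 4) & (i.+1 == j :> nat) || (j.+1 == i :> nat)].
Definition C4 : rel 'I_4 :=
  fun i j => (i.+1 %% 4 == j :> nat) || (j.+1 %% 4 == i :> nat).

From mathcomp Require Import all_boot zify.
Set Implicit Arguments. Unset Strict Implicit. Unset Printing Implicit Defensive.

(* A graph containing an induced P4 is connected, since a vertex outside the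
   component of the P4 would complete it to an induced P4 + K1.  So a
   disconnected G is (P4, C4)-free, hence perfect: a connected (P4, C4)-free
   graph is dominated by any vertex of maximum degree, and deleting it lowers
   both chi and omega by one.
   For the partition take a vertex v of minimum degree and V1 = V - N(v); v has
   no neighbour in V1, so G[V1] is P4-free.  By minimality, a vertex of N(v)
   with two non-neighbours in N(v) has a neighbour outside N[v]; together with
   C4- and (P4 + K1)-freeness this rules out three pairwise non-adjacent
   vertices and induced C5s in N(v), and such a set splits into two cliques in
   a C4-free graph. *)

Section Graph.
Variables (T : finType) (e : rel T).
Hypotheses (e_sym : symmetric e) (e_irr : irreflexive e).

Lemma adj_sym x y : e x y -> e y x.
Proof. by rewrite e_sym. Qed.

Lemma nadj_sym x y : ~~ e x y -> ~~ e y x.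
Proof. by rewrite e_sym. Qed.

Lemma adj_nadj_neq x y z : e x z -> ~~ e y z -> x != y.
Proof. by move=> xz; apply: contraNneq => <-. Qed.

Lemma cliqueP (K : {set T}) :
  reflect (forall x y, x \in K -> y \in K -> x != y -> e x y) (clique e K).
Proof.
apply: (iffP forall_inP) => [cK x y xK yK | cK x xK].
  by apply/implyP; move/forall_inP: (cK x xK); apply.
by apply/forall_inP => y yK; apply/implyP; apply: cK.
Qed.

Lemma induced_in_upper k (h : rel 'I_k) (f : 'I_k -> T) :
  symmetric h -> irreflexive h ->
  (forall i j : 'I_k, i < j -> e (f i) (f j) = h i j) ->
  (forall i j, f i = f j -> (forall l, h i l = h j l) -> i = j) ->
  induced_in e h [set: T].
Proof.
move=> h_sym h_irr upper twin.
have adj (i j : 'I_k) : e (f i) (f j) = h i j.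
  case: (ltngtP i j) => [/upper // | /upper | /val_inj ->].
    by rewrite e_sym h_sym.
  by rewrite e_irr h_irr.
exists f; split=> [i j fij | i | //]; last by rewrite inE.
by apply: twin => // l; rewrite -!adj fij.
Qed.

Lemma induced_P4 a b c d :
  e a b -> e b c -> e c d -> ~~ e a c -> ~~ e b d -> ~~ e a d ->
  induced_in e P4 [set: T].
Proof.
move=> ab bc cd /negbTE ac /negbTE bd /negbTE ad.
apply: (@induced_in_upper _ _ (fun i : 'I_4 => nth a [:: a; b; c; d] i)).
- by move=> i j; rewrite /P4 orbC.
- by move=> [[|[|[|[|i]]]] ?].
- by move=> [[|[|[|[|i]]]] ?] [[|[|[|[|j]]]] ?].
move=> i j _ tw; apply: val_inj.
move: (tw (@Ordinal 4 0 isT)) (tw (@Ordinal 4 1 isT)) (tw (@Ordinal 4 2 isT))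
  (tw (@Ordinal 4 3 isT)).
by move: i j {tw} => [[|[|[|[|i]]]] ?] [[|[|[|[|j]]]] ?].
Qed.

Lemma induced_P4K1 a b c d z :
  e a b -> e b c -> e c d -> ~~ e a c -> ~~ e b d -> ~~ e a d ->
  ~~ e z a -> ~~ e z b -> ~~ e z c -> ~~ e z d ->
  induced_in e P4K1 [set: T].
Proof.
move=> ab bc cd /negbTE ac /negbTE bd /negbTE ad.
move=> /negbTE za /negbTE zb /negbTE zc /negbTE zd.
apply: (@induced_in_upper _ _ (fun i : 'I_5 => nth a [:: a; b; c; d; z] i)).
- by move=> i j; rewrite /P4K1 orbC; case: (i < 4); case: (j < 4).
- by move=> [[|[|[|[|[|i]]]]] ?].
- by move=> [[|[|[|[|[|i]]]]] ?] [[|[|[|[|[|j]]]]] ?] //=; rewrite e_sym.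
move=> i j _ tw; apply: val_inj.
move: (tw (@Ordinal 5 0 isT)) (tw (@Ordinal 5 1 isT)) (tw (@Ordinal 5 2 isT))
  (tw (@Ordinal 5 3 isT)).
by move: i j {tw} => [[|[|[|[|[|i]]]]] ?] [[|[|[|[|[|j]]]]] ?].
Qed.

(* [C4] has twins (opposite vertices), hence the two disequalities. *)
Lemma induced_C4 a b c d : a != c -> b != d ->
  e a b -> e b c -> e c d -> e d a -> ~~ e a c -> ~~ e b d ->
  induced_in e C4 [set: T].
Proof.
move=> a_c b_d ab bc cd da /negbTE ac /negbTE bd.
apply: (@induced_in_upper _ _ (fun i : 'I_4 => nth a [:: a; b; c; d] i)).
- by move=> i j; rewrite /C4 orbC.
- by move=> [[|[|[|[|i]]]] ?].
- by move=> [[|[|[|[|i]]]] ?] [[|[|[|[|j]]]] ?] //=; rewrite e_sym.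
move=> i j /= fij tw; apply: val_inj.
move: (tw (@Ordinal 4 0 isT)) (tw (@Ordinal 4 1 isT)).
move: i j {tw} fij => [[|[|[|[|i]]]] ?] [[|[|[|[|j]]]] ?] //= fij.
all: by [rewrite fij eqxx in a_c | rewrite fij eqxx in b_d].
Qed.

Lemma induced_P4K1_of_P4 (S : {set T}) z :
  {in S, forall x, ~~ e z x} -> induced_in e P4 S -> induced_in e P4K1 [set: T].
Proof.
move=> zS [f [_ fS fP4]].
apply: (@induced_P4K1 (f (@Ordinal 4 0 isT)) (f (@Ordinal 4 1 isT))
  (f (@Ordinal 4 2 isT)) (f (@Ordinal 4 3 isT)) z); by rewrite ?fP4 ?zS.
Qed.

Definition nbhd x := [set y | e x y].

Definition cut_off (S X : {set T}) : bool :=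
  [forall x in X, forall y in S :\: X, ~~ e x y].

Lemma subset_leq_omega (A B : {set T}) : A \subset B -> omega e A <= omega e B.
Proof.
move=> AB; apply/bigmax_leqP => K /andP [KA cK]; apply: leq_bigmax_cond.
by rewrite cK andbT (subset_trans KA AB).
Qed.

Lemma omega_leq_card (S : {set T}) : omega e S <= #|T|.
Proof. by apply/bigmax_leqP => K _; exact: max_card. Qed.

Lemma colorable_omega_leq (S : {set T}) k : colorable e S k -> omega e S <= k.
Proof.
move=> /existsP [c /andP [/forall_inP c_lt /forall_inP c_proper]].
apply/bigmax_leqP => K /andP [KS /cliqueP cK].
have [->|[x0 x0K]] := set_0Vmem K; first by rewrite cards0.
have k_gt0 : 0 < k := leq_ltn_trans (leq0n _) (c_lt x0 (subsetP KS x0 x0K)).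
rewrite -[k]prednK // -[k.-1.+1]card_ord.
apply: (@leq_card_in _ _ (fun x => inord (c x))) => x y xK yK.
have [xS yS] := (subsetP KS x xK, subsetP KS y yK).
move/(congr1 (@nat_of_ord _)); rewrite !inordK ?prednK ?c_lt // => /val_inj cxy.
apply: contraTeq isT => xy; move/forall_inP: (c_proper x xS) => /(_ y yS).
by rewrite cK // cxy eqxx.
Qed.

Lemma bigminn_leq (I : finType) (P : pred I) (F : I -> nat) x j :
  P j -> \big[minn/x]_(i | P i) F i <= F j.
Proof.
move=> Pj; have : j \in index_enum I := mem_index_enum j.
elim: (index_enum I) => [//|i r IH]; rewrite inE big_cons.
case/orP => [/eqP <-|jr]; first by rewrite Pj geq_minl.
by case: (P i); rewrite ?geq_min IH ?orbT.
Qed.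

Lemma chi_omega (S : {set T}) : colorable e S (omega e S) -> chi e S = omega e S.
Proof.
move=> colS; apply/eqP; rewrite eqn_leq; apply/andP; split.
  have omega_lt : omega e S < #|T|.+1 by rewrite ltnS omega_leq_card.
  exact: (@bigminn_leq _ (fun k : 'I__ => colorable e S k) val _ (Ordinal omega_lt)).
apply: (big_ind (fun y => omega e S <= y)); first exact: omega_leq_card.
  by move=> a b ha hb; rewrite leq_min ha hb.
by move=> k; exact: colorable_omega_leq.
Qed.

Lemma colorableW (S : {set T}) k k' : k <= k' -> colorable e S k -> colorable e S k'.
Proof.
move=> kk' /existsP [c /andP [/forall_inP c_lt c_proper]].
apply/existsP; exists c; rewrite c_proper andbT.
by apply/forall_inP => x /c_lt /leq_trans; apply.
Qed.

Lemma colorable_cut_off (S X : {set T}) k : X \subset S -> cut_off S X ->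
  colorable e X k -> colorable e (S :\: X) k -> colorable e S k.
Proof.
move=> XS /forall_inP cut /existsP [c1 /andP [/forall_inP lt1 /forall_inP pr1]].
move=> /existsP [c2 /andP [/forall_inP lt2 /forall_inP pr2]].
have nadj x y : x \in X -> y \in S -> y \notin X -> ~~ e x y.
  by move=> xX yS yX; move/forall_inP: (cut x xX); apply; rewrite inE yX.
apply/existsP; exists [ffun x => if x \in X then c1 x else c2 x]; apply/andP; split.
  apply/forall_inP => x xS; rewrite ffunE; case: ifP => xX; first exact: lt1.
  by apply: lt2; rewrite inE xX.
apply/forall_inP => x xS; apply/forall_inP => y yS; apply/implyP => xy.
rewrite !ffunE; case: ifP => xX; case: ifP => yX.
- exact: (implyP (forall_inP (pr1 x xX) y yX)).
- by rewrite (negPf (nadj x y xX yS (negbT yX))) in xy.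
- by rewrite e_sym (negPf (nadj y x yX xS (negbT xX))) in xy.
- have [xS' yS'] : x \in S :\: X /\ y \in S :\: X by rewrite !inE xX yX.
  exact: (implyP (forall_inP (pr2 x xS') y yS')).
Qed.

Lemma colorable_setD1 (S : {set T}) u k : k <= #|T| ->
  colorable e (S :\ u) k -> colorable e S k.+1.
Proof.
move=> kT /existsP [c /andP [/forall_inP c_lt /forall_inP c_proper]].
have new_colour x : x \in S -> x != u -> c x != inord k :> 'I_#|T|.+1.
  by move=> xS xu; rewrite -(inj_eq (@ord_inj _)) inordK ?ltnS // neq_ltn c_lt // !inE xu.
apply/existsP; exists [ffun x => if x == u then inord k else c x].
apply/andP; split.
  apply/forall_inP => x xS; rewrite ffunE; case: eqP => [_|/eqP xu].
    by rewrite inordK.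
  by rewrite ltnS ltnW // c_lt // !inE xu.
apply/forall_inP => x xS; apply/forall_inP => y yS; apply/implyP => xy.
rewrite !ffunE; case: (eqVneq x u) => [xu|xu]; case: (eqVneq y u) => [yu|yu].
- by rewrite xu yu e_irr in xy.
- by rewrite eq_sym new_colour.
- by rewrite new_colour.
- have [xS' yS'] : x \in S :\ u /\ y \in S :\ u by rewrite !inE xu yu.
  exact: (implyP (forall_inP (c_proper x xS') y yS')).
Qed.

Lemma omega_setD1_universal (S : {set T}) u : u \in S -> {in S :\ u, forall w, e u w} ->
  (omega e (S :\ u)).+1 <= omega e S.
Proof.
move=> uS univ.
have [K /andP [KS cK] ->] : {K : {set T} | (K \subset S :\ u) && clique e K &
    omega e (S :\ u) = #|K|}.
  apply: eq_bigmax_cond; apply/card_gt0P; exists set0.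
  by rewrite unfold_in /= sub0set; apply/cliqueP => x y; rewrite inE.
have uK : u \notin K by apply/negP => /(subsetP KS); rewrite !inE eqxx.
apply: (@leq_trans #|u |: K|); first by rewrite cardsU1 uK.
apply: leq_bigmax_cond.
rewrite subUset sub1set uS (subset_trans KS (subsetDl _ _)) /=.
have KSu x : x \in K -> x \in S :\ u := subsetP KS x.
apply/cliqueP => x y; rewrite !inE => /predU1P [-> | xK] /predU1P [-> | yK].
- by rewrite eqxx.
- by move=> _; apply: univ (KSu y yK).
- by move=> _; rewrite e_sym; apply: univ (KSu x xK).
- by move/cliqueP: cK; apply.
Qed.

Section TriviallyPerfect.
Hypotheses (noP4 : ~ induced_in e P4 [set: T]) (noC4 : ~ induced_in e C4 [set: T]).

(* Otherwise [u], [y] and all of [N(u) :\ x] lie in [N(x)], so that [x] would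
   have larger degree than [u] in [G[S]]. *)
Lemma max_degree_nonadj (S : {set T}) u x y :
  {in S, forall w, #|nbhd w :&: S| <= #|nbhd u :&: S|} ->
  u \in S -> x \in S -> y \in S -> y != u -> e u x -> e x y -> ~~ e u y ->
  exists z, [/\ z \in S, e u z, ~~ e x z & z != x].
Proof.
move=> umax uS xS yS yu ux xy /negbTE uy.
have [/existsP [z /and4P [zS uz xz zx]] | /existsPn all_adj] :=
  boolP [exists z, [&& z \in S, e u z, ~~ e x z & z != x]].
  by exists z.
have sub : u |: (y |: ((nbhd u :&: S) :\ x)) \subset nbhd x :&: S.
  apply/subsetP => t; rewrite !inE => /or3P [/eqP -> | /eqP -> | /and3P [tx ut tS]].
  - by rewrite uS e_sym ux.
  - by rewrite xy yS.
  - by move: (all_adj t); rewrite tS ut tx /= andbT negbK => ->.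
move: (subset_leq_card sub) (umax x xS) (cardsD1 x (nbhd u :&: S)).
rewrite cardsU1 cardsU1 !inE e_irr uy eq_sym (negbTE yu) ux xS /=; lia.
Qed.

Lemma max_degree_universal (S : {set T}) u :
  {in S, forall w, #|nbhd w :&: S| <= #|nbhd u :&: S|} -> u \in S ->
  (forall X : {set T}, X \proper S -> X != set0 -> ~~ cut_off S X) ->
  {in S :\ u, forall w, e u w}.
Proof.
move=> umax uS connS w; rewrite !inE => /andP [wu wS].
apply/negPn/negP => uw.
pose X := [set x in S | (x == u) || e u x].
have XS : X \proper S.
  rewrite properEneq; apply/andP; split; last by apply/subsetP => x; rewrite inE => /andP [].
  by apply: contraTneq wS => SX; rewrite -SX inE (negbTE wu) (negbTE uw) andbF.
have X0 : X != set0 by apply/set0Pn; exists u; rewrite inE uS eqxx.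
have /forall_inPn [x xX /forall_inPn [y yX /negPn xy]] := connS X XS X0.
move: yX; rewrite !inE negb_and negb_or => /andP [/orP [/negP //| /andP [yu uy]] yS].
have {xX} [xS ux] : x \in S /\ e u x.
  by move: xX; rewrite inE => /andP [xS /predU1P [xu | //]]; rewrite xu (negbTE uy) in xy.
have [z [zS uz xz zx]] := max_degree_nonadj umax uS xS yS yu ux xy uy.
have [zy | zy] := boolP (e z y).
  by apply: noC4; apply: (induced_C4 zx _ (adj_sym uz) ux xy (adj_sym zy) (nadj_sym xz) uy);
    rewrite eq_sym.
by apply: noP4; apply: (induced_P4 (adj_sym uz) ux xy (nadj_sym xz) uy zy).
Qed.

Lemma colorable_omega (S : {set T}) : colorable e S (omega e S).
Proof.
have [n] := ubnP #|S|; elim: n S => // n IH S; rewrite ltnS => Sn.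
have [/existsP [X /and3P [XS X0 cutX]] | conn] :=
  boolP [exists X : {set T}, [&& X \proper S, X != set0 & cut_off S X]].
  apply: (colorable_cut_off (proper_sub XS) cutX).
    apply: colorableW (subset_leq_omega (proper_sub XS)) (IH X _).
    exact: leq_trans (proper_card XS) Sn.
  apply: colorableW (subset_leq_omega (subsetDl S X)) (IH _ _).
  apply: leq_trans Sn; rewrite cardsDS ?(proper_sub XS) // ltn_subrL.
  by rewrite card_gt0 X0 (leq_ltn_trans (leq0n _) (proper_card XS)).
have [-> | [x0 x0S]] := set_0Vmem S.
  by apply/existsP; exists [ffun=> ord0]; apply/andP; split; apply/forall_inP => x; rewrite inE.
have [u uS umax] := @arg_maxnP T x0 (fun w => w \in S) (fun w => #|nbhd w :&: S|) x0S.
have connS (X : {set T}) : X \proper S -> X != set0 -> ~~ cut_off S X.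
  by move=> XS X0; apply: contra conn => cutX; apply/existsP; exists X; rewrite XS X0.
have univ := max_degree_universal umax uS connS.
have ltS : #|S :\ u| < n by rewrite (leq_trans _ Sn) // [#|S|](cardsD1 u) uS.
apply: colorableW (omega_setD1_universal uS univ) _.
exact: colorable_setD1 (omega_leq_card _) (IH _ ltS).
Qed.

End TriviallyPerfect.

Lemma perfect_of_P4_C4_free :
  ~ induced_in e P4 [set: T] -> ~ induced_in e C4 [set: T] -> perfect e.
Proof. by move=> noP4 noC4 S; apply/chi_omega/colorable_omega. Qed.

Lemma connected_of_induced_P4 :
  ~ induced_in e P4K1 [set: T] -> induced_in e P4 [set: T] -> connected e.
Proof.
move=> noP4K1 [f [finj _ fP4]].
have f0f n (lt : n < 4) : connect e (f ord0) (f (Ordinal lt)).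
  elim: n lt => [lt | n IH lt].
    by rewrite (_ : Ordinal lt = ord0) ?connect0 //; exact: val_inj.
  by apply: connect_trans (IH (ltnW lt)) (connect1 _); rewrite fP4 /P4 /= eqxx.
have reach z : connect e (f ord0) z.
  apply/negPn/negP => nz; apply: noP4K1.
  apply: (@induced_P4K1_of_P4 [set t | connect e (f ord0) t] z).
    move=> t; rewrite inE => f0t; apply: contraNN nz => zt.
    exact: connect_trans f0t (connect1 (adj_sym zt)).
  by exists f; split=> // -[n lt]; rewrite inE f0f.
by move=> x y; rewrite (connect_trans _ (reach y)) // (sym_connect_sym e_sym) reach.
Qed.

Definition stable3 x y z := [&& x != y, x != z, y != z, ~~ e x y, ~~ e x z & ~~ e y z].

Definition induces_C5 c0 c1 c2 c3 c4 :=
  [&& e c0 c1, e c1 c2, e c2 c3, e c3 c4, e c4 c0,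
      ~~ e c0 c2, ~~ e c1 c3, ~~ e c2 c4, ~~ e c3 c0 & ~~ e c4 c1].

Lemma induces_C5_rot c0 c1 c2 c3 c4 :
  induces_C5 c0 c1 c2 c3 c4 -> induces_C5 c1 c2 c3 c4 c0.
Proof.
case/and5P => e01 e12 e23 e34 /and5P [e40 n02 n13 n24 /andP [n30 n41]].
by rewrite /induces_C5 e12 e23 e34 e40 e01 n13 n24 n30 n41 n02.
Qed.

Lemma induces_C5_rev c0 c1 c2 c3 c4 :
  induces_C5 c0 c1 c2 c3 c4 -> induces_C5 c0 c4 c3 c2 c1.
Proof.
case/and5P => e01 e12 e23 e34 /and5P [e40 n02 n13 n24 /andP [n30 n41]].
rewrite /induces_C5 !(adj_sym e01, adj_sym e12, adj_sym e23, adj_sym e34, adj_sym e40).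
by rewrite (nadj_sym n30) (nadj_sym n24) (nadj_sym n13) (nadj_sym n02) (nadj_sym n41).
Qed.

Lemma induces_C5_flip c0 c1 c2 c3 c4 :
  induces_C5 c0 c1 c2 c3 c4 -> induces_C5 c1 c0 c4 c3 c2.
Proof. by move/induces_C5_rev/induces_C5_rot/induces_C5_rot/induces_C5_rot/induces_C5_rot. Qed.

Section P4K1_C4_free.
Hypotheses (noP4K1 : ~ induced_in e P4K1 [set: T]) (noC4 : ~ induced_in e C4 [set: T]).

Lemma C5_two_outer_nbrs c0 c1 c2 c3 c4 w u : induces_C5 c0 c1 c2 c3 c4 ->
  e w c0 -> e w c1 -> ~~ e w c2 -> ~~ e w c4 ->
  e u c3 -> e u c4 -> ~~ e u c0 -> ~~ e u c2 -> False.
Proof.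
case/and5P => e01 e12 e23 e34 /and5P [e40 n02 n13 n24 /andP [n30 n41]].
move=> w0 w1 w2 w4 u3 u4 u0 u2.
have [wu | wu] := boolP (e w u).
  apply: noC4; apply: (induced_C4 (adj_nadj_neq w1 n41) (adj_nadj_neq u3 (nadj_sym n30))
    wu u4 e40 (adj_sym w0) w4 u0).
apply: noP4K1; apply: (induced_P4K1 w0 (adj_sym e40) (adj_sym u4) w4 (nadj_sym u0) wu
  (nadj_sym w2) (nadj_sym n02) n24 (nadj_sym u2)).
Qed.

Section TwoCliques.
Variable P : {set T}.
Hypothesis P_no_stable3 : forall x y z, x \in P -> y \in P -> z \in P -> ~~ stable3 x y z.
Hypothesis P_no_C5 : forall c0 c1 c2 c3 c4,
  c0 \in P -> c1 \in P -> c2 \in P -> c3 \in P -> c4 \in P -> ~~ induces_C5 c0 c1 c2 c3 c4.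

Lemma common_nonnbrs_adj x y z : x \in P -> y \in P -> z \in P ->
  x != y -> x != z -> y != z -> ~~ e x y -> ~~ e x z -> e y z.
Proof.
move=> xP yP zP x_y x_z y_z xy xz; apply/negPn/negP => yz.
by move: (P_no_stable3 xP yP zP); rewrite /stable3 x_y x_z y_z xy xz yz.
Qed.

Section Split.
Variables x y : T.
Hypotheses (xP : x \in P) (yP : y \in P) (x_y : x != y) (xy : ~~ e x y).

Let A := [set a in P | (a != x) && ~~ e x a].
Let B := [set u in P | (u != x) && [forall a in A, (a != u) ==> e a u]].

Lemma A_adj a b : a \in A -> b \in A -> a != b -> e a b.
Proof.
rewrite !inE => /and3P [aP a_x xa] /and3P [bP b_x xb] a_b.
by apply: (common_nonnbrs_adj xP aP bP) => //; rewrite eq_sym.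
Qed.

Lemma y_in_A : y \in A.
Proof. by rewrite inE yP eq_sym x_y. Qed.

Lemma B_clique : clique e B.
Proof.
apply/cliqueP => u1 u2; rewrite !inE => /and3P [u1P u1x /forall_inP A_u1].
move=> /and3P [u2P u2x /forall_inP A_u2] u12.
have [u1A | u1A] := boolP (u1 \in A); first exact: (implyP (A_u2 u1 u1A)).
have [u2A | u2A] := boolP (u2 \in A).
  by rewrite e_sym; apply: (implyP (A_u1 u2 u2A)); rewrite eq_sym.
have [xu1 xu2] : e x u1 /\ e x u2.
  by move: u1A u2A; rewrite !inE u1P u2P u1x u2x !negbK.
have yu1 : e y u1 by apply: (implyP (A_u1 y y_in_A)); apply: contraNneq xy => ->.
have yu2 : e y u2 by apply: (implyP (A_u2 y y_in_A)); apply: contraNneq xy => ->.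
apply/negPn/negP => u1u2; apply: noC4.
exact: (induced_C4 x_y u12 xu1 (adj_sym yu1) yu2 (adj_sym xu2) xy u1u2).
Qed.

Lemma outside_B u : u \in P :\: B -> u != x ->
  e x u /\ exists2 a, a \in A & (a != u) && ~~ e a u.
Proof.
rewrite !inE => /andP [uB uP] ux; move: uB; rewrite uP ux /= => uB.
have xu : e x u.
  apply/negPn/negP => xu; move/negP: uB; apply; apply/forall_inP => a aA.
  by apply/implyP => au; apply: A_adj => //; rewrite inE uP ux.
split=> //; case/forall_inPn: uB => a aA; rewrite negb_imply => au.
by exists a.
Qed.

(* Otherwise [a y q x p] is an induced [C5]. *)
Lemma outside_B_nonadj_pair p q a : p \in P -> q \in P -> e x p -> e x q ->
  p != q -> ~~ e p q -> ~~ e y p -> e y q -> a \in A -> a != q -> ~~ e a q -> False.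
Proof.
move=> pP qP xp xq p_q pq yp yq aA a_q aq.
have ay : e a y.
  by apply: (A_adj aA y_in_A); apply: contraNneq aq => ->.
have [aP xa] : a \in P /\ ~~ e x a by move: aA; rewrite inE => /and3P [].
have pa : e p a.
  apply: (common_nonnbrs_adj qP pP aP _ _ (adj_nadj_neq (adj_sym xp) (nadj_sym xa))
    (nadj_sym pq) (nadj_sym aq)); by rewrite eq_sym.
move/negP: (P_no_C5 aP yP qP xP pP); apply.
by rewrite /induces_C5 ay yq (adj_sym xq) xp pa aq (nadj_sym xy) (nadj_sym pq) xa (nadj_sym yp).
Qed.

Lemma outside_B_clique : clique e (P :\: B).
Proof.
apply/cliqueP => u1 u2 u1V u2V u12.
have [u1x | u1x] := eqVneq u1 x.
  by move: u12; rewrite u1x eq_sym => u2x; case: (outside_B u2V u2x).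
have [u2x | u2x] := eqVneq u2 x.
  by rewrite u2x e_sym; case: (outside_B u1V u1x).
have [xu1 [a1 a1A /andP [a1u1 a1_u1]]] := outside_B u1V u1x.
have [xu2 [a2 a2A /andP [a2u2 a2_u2]]] := outside_B u2V u2x.
have [u1P u2P] : u1 \in P /\ u2 \in P by move: u1V u2V; rewrite !inE => /andP [_ ->] /andP [_ ->].
apply/negPn/negP => n12.
have [yu1 | yu1] := boolP (e y u1); have [yu2 | yu2] := boolP (e y u2).
- apply: noC4; exact: (induced_C4 x_y u12 xu1 (adj_sym yu1) yu2 (adj_sym xu2) xy n12).
- by apply: (outside_B_nonadj_pair u2P u1P xu2 xu1 _ (nadj_sym n12) yu2 yu1 a1A a1u1 a1_u1);
    rewrite eq_sym.
- exact: (outside_B_nonadj_pair u1P u2P xu1 xu2 u12 n12 yu1 yu2 a2A a2u2 a2_u2).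
- move/negP: n12; apply; apply: (common_nonnbrs_adj yP u1P u2P _ _ u12 yu1 yu2).
    by apply: contraNneq xy => ->.
  by apply: contraNneq xy => ->.
Qed.

End Split.

Lemma two_cliques_cover : exists V2 V3 : {set T},
  [/\ V2 :|: V3 = P, [disjoint V2 & V3], clique e V2 & clique e V3].
Proof.
have [cP | /forall_inPn [x xP /forall_inPn [y yP]]] := boolP (clique e P).
  exists P, set0; rewrite setU0 disjoints_subset setC0 subsetT.
  by split=> //; apply/cliqueP => x y; rewrite inE.
rewrite negb_imply => /andP [x_y xy].
pose A := [set a in P | (a != x) && ~~ e x a].
pose B := [set u in P | (u != x) && [forall a in A, (a != u) ==> e a u]].
have BP : B \subset P by apply/subsetP => u; rewrite inE => /andP [].
exists B, (P :\: B); split.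
- by rewrite -{1}(setIidPr BP) setID.
- by rewrite disjoints_subset; apply/subsetP => u; rewrite !inE => ->.
- exact: B_clique yP x_y xy.
- exact: outside_B_clique xP yP x_y xy.
Qed.

End TwoCliques.

Section MinDegree.
Variable v : T.
Hypothesis v_min : forall u, #|nbhd v| <= #|nbhd u|.

(* Otherwise [x], [p], [q] and [N(x)] would all fit into [N[v]]. *)
Lemma min_degree_outer_nbr x p q : e v x -> e v p -> e v q ->
  p != x -> q != x -> p != q -> ~~ e x p -> ~~ e x q ->
  exists w, [/\ e x w, ~~ e v w & w != v].
Proof.
move=> vx vp vq px qx pq /negbTE xp /negbTE xq.
have [/existsP [w /and3P [xw vw wv]] | /existsPn inside] :=
  boolP [exists w, [&& e x w, ~~ e v w & w != v]].
  by exists w.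
have sub : x |: (p |: (q |: nbhd x)) \subset v |: nbhd v.
  apply/subsetP => w; rewrite !inE => /or4P [/eqP-> | /eqP-> | /eqP-> | xw].
  - by rewrite vx orbT.
  - by rewrite vp orbT.
  - by rewrite vq orbT.
  by move: (inside w); rewrite xw /= negb_and !negbK orbC.
exfalso; move: (subset_leq_card sub) (v_min x).
rewrite !cardsU1 !inE !e_irr xp xq (eq_sym x p) (eq_sym x q) (negbTE px) (negbTE qx).
rewrite (negbTE pq) /=; lia.
Qed.

Lemma nbhd_no_stable3 x y z : e v x -> e v y -> e v z -> ~~ stable3 x y z.
Proof.
move=> vx vy vz; apply/negP => /and5P [x_y x_z y_z xy /andP [xz yz]].
have [y_x z_x z_y] : [/\ y != x, z != x & z != y] by split; rewrite eq_sym.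
have [w [xw vw wv]] := min_degree_outer_nbr vx vy vz y_x z_x y_z xy xz.
have [u [yu vu uv]] := min_degree_outer_nbr vy vx vz x_y z_y x_z (nadj_sym xy) yz.
have wy : ~~ e w y.
  apply/negP => wy; apply: noC4.
  exact: (induced_C4 x_y wv xw wy (adj_sym vy) vx xy (nadj_sym vw)).
have wz : ~~ e w z.
  apply/negP => wz; apply: noC4.
  exact: (induced_C4 x_z wv xw wz (adj_sym vz) vx xz (nadj_sym vw)).
have ux : ~~ e u x.
  apply/negP => ux; apply: noC4.
  exact: (induced_C4 y_x uv yu ux (adj_sym vx) vy (nadj_sym xy) (nadj_sym vu)).
have uz : ~~ e u z.
  apply/negP => uz; apply: noC4.
  exact: (induced_C4 y_z uv yu uz (adj_sym vz) vy yz (nadj_sym vu)).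
have [wu | wu] := boolP (e w u); apply: noP4K1.
  exact: (induced_P4K1 xw wu (adj_sym yu) (nadj_sym ux) wy xy (nadj_sym xz) (nadj_sym wz)
    (nadj_sym uz) (nadj_sym yz)).
exact: (induced_P4K1 (adj_sym xw) (adj_sym vx) vz (nadj_sym vw) xz wz (nadj_sym wu) ux
  (nadj_sym vu) uz).
Qed.

Lemma outer_nbr_C5 c0 c1 c2 c3 c4 w :
  e v c0 -> e v c1 -> e v c2 -> e v c3 -> e v c4 -> induces_C5 c0 c1 c2 c3 c4 ->
  e c0 w -> ~~ e v w -> w != v -> [/\ ~~ e w c2, ~~ e w c3 & e w c1 != e w c4].
Proof.
move=> v0 v1 v2 v3 v4 /and5P [e01 e12 e23 e34 /and5P [e40 n02 n13 n24 /andP [n30 n41]]].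
move=> c0w vw wv; have wv' := nadj_sym vw.
have w2 : ~~ e w c2.
  apply/negP => w2; apply: noC4.
  exact: (induced_C4 (adj_nadj_neq (adj_sym e40) n24) wv c0w w2 (adj_sym v2) v0 n02 wv').
have w3 : ~~ e w c3.
  apply/negP => w3; apply: noC4.
  exact: (induced_C4 (adj_nadj_neq e01 (nadj_sym n13)) wv c0w w3 (adj_sym v3) v0
    (nadj_sym n30) wv').
split=> //; apply/negP => /eqP w14.
have [w1 | w1] := boolP (e w c1); have w4 := w1; rewrite w14 in w4.
  apply: noC4; apply: (induced_C4 wv (adj_nadj_neq e12 (nadj_sym n24)) w1 (adj_sym v1) v4
    (adj_sym w4) wv' (nadj_sym n41)).
apply: noP4K1; exact: (induced_P4K1 e12 e23 e34 n13 n24 (nadj_sym n41) w1 w2 w3 w4).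
Qed.

Lemma nbhd_C5_outer_nbr c0 c1 c2 c3 c4 w :
  e v c0 -> e v c1 -> e v c2 -> e v c3 -> e v c4 -> induces_C5 c0 c1 c2 c3 c4 ->
  e c0 w -> ~~ e v w -> w != v -> ~~ e w c1.
Proof.
move=> v0 v1 v2 v3 v4 C c0w vw wv; apply/negP => w1.
have /and5P [e01 _ _ _ /and5P [e40 _ n13 _ /andP [n30 n41]]] := C.
have [w2 _ w14] := outer_nbr_C5 v0 v1 v2 v3 v4 C c0w vw wv.
have w4 : ~~ e w c4 by move: w14; rewrite w1; case: (e w c4).
have [u [c3u vu uv]] := min_degree_outer_nbr v3 v0 v1 (adj_nadj_neq e01 (nadj_sym n13))
  (adj_nadj_neq (adj_sym e01) n30) (adj_nadj_neq (adj_sym e40) (nadj_sym n41)) n30 (nadj_sym n13).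
have C3 : induces_C5 c3 c4 c0 c1 c2 by move: C => /induces_C5_rot/induces_C5_rot/induces_C5_rot.
have [u0 u1 u42] := outer_nbr_C5 v3 v4 v0 v1 v2 C3 c3u vu uv.
have [u4 | u4] := boolP (e u c4).
  have u2 : ~~ e u c2 by move: u42; rewrite u4; case: (e u c2).
  exact: (C5_two_outer_nbrs C (adj_sym c0w) w1 w2 w4 (adj_sym c3u) u4 u0 u2).
have u2 : e u c2 by move: u42; rewrite (negbTE u4); case: (e u c2).
exact: (C5_two_outer_nbrs (induces_C5_flip C) w1 (adj_sym c0w) w4 w2 (adj_sym c3u) u2 u1 u4).
Qed.

Lemma nbhd_no_C5 c0 c1 c2 c3 c4 :
  e v c0 -> e v c1 -> e v c2 -> e v c3 -> e v c4 -> ~~ induces_C5 c0 c1 c2 c3 c4.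
Proof.
move=> v0 v1 v2 v3 v4; apply/negP => C.
have /and5P [_ e12 e23 _ /and5P [_ n02 n13 _ /andP [n30 _]]] := C.
have [w [c0w vw wv]] := min_degree_outer_nbr v0 v2 v3 (adj_nadj_neq e23 (nadj_sym n30))
  (adj_nadj_neq (adj_sym e23) n02) (adj_nadj_neq (adj_sym e12) (nadj_sym n13)) n02
  (nadj_sym n30).
have [_ _ w14] := outer_nbr_C5 v0 v1 v2 v3 v4 C c0w vw wv.
have w1 : ~~ e w c1 := nbhd_C5_outer_nbr v0 v1 v2 v3 v4 C c0w vw wv.
have w4 : ~~ e w c4 := nbhd_C5_outer_nbr v0 v4 v3 v2 v1 (induces_C5_rev C) c0w vw wv.
by move: w14; rewrite (negbTE w1) (negbTE w4).
Qed.

Lemma min_degree_partition : exists V2 V3 : {set T},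
  [/\ ~: nbhd v :|: V2 :|: V3 = [set: T],
      [&& [disjoint ~: nbhd v & V2], [disjoint ~: nbhd v & V3] & [disjoint V2 & V3]],
      ~ induced_in e P4 (~: nbhd v), clique e V2 & clique e V3].
Proof.
have [V2 [V3 [V23 disj23 cl2 cl3]]] : exists V2 V3 : {set T},
    [/\ V2 :|: V3 = nbhd v, [disjoint V2 & V3], clique e V2 & clique e V3].
  apply: two_cliques_cover => [x y z | c0 c1 c2 c3 c4]; rewrite !inE.
    exact: nbhd_no_stable3.
  exact: nbhd_no_C5.
exists V2, V3; split=> //.
- by rewrite -setUA V23 setUC setUCr.
- by rewrite disj23 !disjoints_subset !setCS -V23 subsetUl subsetUr.
- by move=> P4V1; apply: noP4K1; apply: (@induced_P4K1_of_P4 _ v _ P4V1) => x; rewrite !inE.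
Qed.

End MinDegree.

Lemma connected_of_not_perfect : ~ perfect e -> connected e.
Proof.
move=> not_perfect x y; apply/negPn/negP => xy; apply: not_perfect.
apply: perfect_of_P4_C4_free noC4 => P4G; move/negP: xy; apply.
exact: connected_of_induced_P4 noP4K1 P4G x y.
Qed.

Lemma partition_P4_free_two_cliques : exists V1 V2 V3 : {set T},
  [/\ V1 :|: V2 :|: V3 = [set: T],
      [&& [disjoint V1 & V2], [disjoint V1 & V3] & [disjoint V2 & V3]],
      ~ induced_in e P4 V1, clique e V2 & clique e V3].
Proof.
have [t0 _ | T0] := pickP T.
  have [v _ v_min] := @arg_minnP T t0 xpredT (fun u => #|nbhd u|) isT.
  by have [V2 [V3]] := min_degree_partition (fun u => v_min u isT); exists (~: nbhd v), V2, V3.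
have clique0 : clique e set0 by apply/cliqueP => x y; rewrite inE.
exists [set: T], set0, set0; rewrite !setU0 !disjoints_subset setC0 !subsetT.
by split=> // -[f _]; have := T0 (f ord0).
Qed.

End P4K1_C4_free.

End Graph.

Theorem theorem3p1 (T : finType) (e : rel T)
  (e_sym : symmetric e) (e_irr : irreflexive e)
  (free_P4K1 : ~ induced_in e P4K1 [set: T])
  (free_C4 : ~ induced_in e C4 [set: T])
  (not_perfect : ~ perfect e) :
  connected e /\
  exists V1 V2 V3 : {set T},
    [/\ V1 :|: V2 :|: V3 = [set: T],
        [&& [disjoint V1 & V2], [disjoint V1 & V3] & [disjoint V2 & V3]],
        ~ induced_in e P4 V1,
        clique e V2 & clique e V3].
Proof.
split; first exact: connected_of_not_perfect free_P4K1 free_C4 not_perfect.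
exact: partition_P4_free_two_cliques free_P4K1 free_C4.
Qed.
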